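(* Consider the stochastic quadratic problem with symmetric positive definite $Q=(q_{ij})\in\mathbb{R}^{d\times d}$ having eigenvalues $\lambda_1,\dots,\lambda_d>0$, and fix $\theta$. For the stochastic direction $z=-\operatorname{sign}(g(\theta))$, the expected improvement with optimal step size satisfies $$\mathcal{I}_{\mathrm{SSD}}(\theta)\ge\frac12\,\frac{\Big(\sum_{i=1}^d(2\rho_i-1)\,|\nabla\mathcal{L}(\theta)_i|\Big)^2}{\sum_{i=1}^d\lambda_i}\;p_{\mathrm{diag}}(Q),$$ where $\rho_i=\mathbf{P}[\operatorname{sign}(g(\theta)_i)=\operatorname{sign}(\nabla\mathcal{L}(\theta)_i)]$ and $p_{\mathrm{diag}}(Q)=\big(\sum_{i=1}^d|q_{ii}|\big)/\big(\sum_{i,j=1}^d|q_{ij}|\big)$.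
   Context: Stochastic quadratic problem (sQP): loss $\ell(\theta;x)=\frac12(\theta-x)^TQ(\theta-x)$ with data $x\sim\mathcal{N}(x^\ast,\nu^2I)$, $\nu\ge0$; objective $\mathcal{L}(\theta)=\mathbf{E}_x[\ell(\theta;x)]$, with $\nabla\mathcal{L}(\theta)=Q(\theta-x^\ast)$; stochastic gradient $g(\theta)=Q(\theta-x)\sim\mathcal{N}(\nabla\mathcal{L}(\theta),\nu^2QQ)$. $\operatorname{sign}$ is applied element-wise with $\operatorname{sign}(0)=1$. For a random direction $z$ with $\mathbf{E}[z^TQz]>0$, the expected improvement with the optimal step size $\alpha_\ast=-\nabla\mathcal{L}(\theta)^T\mathbf{E}[z]/\mathbf{E}[z^TQz]$ is $\mathcal{I}(\theta):=|\mathbf{E}[\mathcal{L}(\theta+\alpha_\ast z)]-\mathcal{L}(\theta)|=\frac{(\nabla\mathcal{L}(\theta)^T\mathbf{E}[z])^2}{2\,\mathbf{E}[z^TQz]}$. *)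

From HB Require Import structures.
From mathcomp Require Import all_boot all_order all_algebra.
Set Implicit Arguments. Unset Strict Implicit. Unset Printing Implicit Defensive.
Import Order.TTheory GRing.Theory Num.Theory.
Local Open Scope ring_scope.

Definition sgn (R : realFieldType) (x : R) : R := if 0 <= x then 1 else -1.

Definition qform (R : realFieldType) (d : nat) (Q : 'M[R]_d) (v : 'cV[R]_d) : R :=
  (v^T *m Q *m v) 0 0.

(* objective L(theta) = E_x[ 1/2 (theta-x)^T Q (theta-x) ], x ~ N(xstar, nu^2 I),
   in closed form: 1/2 (theta - xstar)^T Q (theta - xstar) + nu^2/2 tr Q *)
Definition sqp_loss (R : realFieldType) (d : nat) (Q : 'M[R]_d) (xstar : 'cV[R]_d)
  (nu : R) (theta : 'cV[R]_d) : R :=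
  2^-1 * qform Q (theta - xstar) + 2^-1 * nu ^+ 2 * \tr Q.

Definition sqp_grad (R : realFieldType) (d : nat) (Q : 'M[R]_d) (xstar theta : 'cV[R]_d)
  : 'cV[R]_d := Q *m (theta - xstar).

(* A sign pattern b : {ffun 'I_d -> bool} encodes sign(g(theta)) (b i = true iff
   sign(g_i) = +1); the SSD direction is z = - sign(g). *)
Definition ssd_dir (R : realFieldType) (d : nat) (b : {ffun 'I_d -> bool}) : 'cV[R]_d :=
  \col_i (if b i then -1 else 1).

Definition sign_of_pattern (R : realFieldType) (d : nat) (b : {ffun 'I_d -> bool})
  (i : 'I_d) : R := if b i then 1 else -1.

(* P : law of the sign pattern sign(g(theta)) *)
Definition E_dir (R : realFieldType) (d : nat) (P : {ffun 'I_d -> bool} -> R) : 'cV[R]_d :=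
  \sum_b P b *: ssd_dir R b.

Definition E_qform (R : realFieldType) (d : nat) (Q : 'M[R]_d)
  (P : {ffun 'I_d -> bool} -> R) : R :=
  \sum_b P b * qform Q (ssd_dir R b).

Definition opt_step (R : realFieldType) (d : nat) (Q : 'M[R]_d) (xstar theta : 'cV[R]_d)
  (P : {ffun 'I_d -> bool} -> R) : R :=
  - (((sqp_grad Q xstar theta)^T *m E_dir P) 0 0) / E_qform Q P.

Definition E_loss (R : realFieldType) (d : nat) (Q : 'M[R]_d) (xstar : 'cV[R]_d) (nu : R)
  (theta : 'cV[R]_d) (P : {ffun 'I_d -> bool} -> R) (alpha : R) : R :=
  \sum_b P b * sqp_loss Q xstar nu (theta + alpha *: ssd_dir R b).

Definition improvement (R : realFieldType) (d : nat) (Q : 'M[R]_d) (xstar : 'cV[R]_d)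
  (nu : R) (theta : 'cV[R]_d) (P : {ffun 'I_d -> bool} -> R) : R :=
  `| E_loss Q xstar nu theta P (opt_step Q xstar theta P) - sqp_loss Q xstar nu theta |.

Definition rho (R : realFieldType) (d : nat) (Q : 'M[R]_d) (xstar theta : 'cV[R]_d)
  (P : {ffun 'I_d -> bool} -> R) (i : 'I_d) : R :=
  \sum_(b | sign_of_pattern R b i == sgn (sqp_grad Q xstar theta i 0)) P b.

Definition p_diag (R : realFieldType) (d : nat) (Q : 'M[R]_d) : R :=
  (\sum_i `|Q i i|) / (\sum_i \sum_j `|Q i j|).

Definition pos_def (R : realFieldType) (d : nat) (Q : 'M[R]_d) : Prop :=
  Q^T = Q /\ forall v : 'cV[R]_d, v != 0 -> 0 < qform Q v.

From HB Require Import structures.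
From mathcomp Require Import all_boot all_order all_algebra ring lra.
Set Implicit Arguments. Unset Strict Implicit. Unset Printing Implicit Defensive.
Import Order.TTheory GRing.Theory Num.Theory.
Local Open Scope ring_scope.

(* Since L is quadratic, E[L(θ + α z)] - L(θ) = α ∇Lᵀ E[z] + α²/2 E[zᵀ Q z], so the
   optimal step gains (∇Lᵀ E[z])² / (2 E[zᵀ Q z]).  Coordinatewise,
   ∇L_i E[z_i] = -(2 ρ_i - 1) |∇L_i|; and z is a ±1 vector, so zᵀ Q z <= Σ |q_ij|.
   Finally Σ λ_i = tr Q = Σ |q_ii| because the diagonal of Q is positive, which
   turns 1 / Σ |q_ij| into p_diag(Q) / Σ λ_i. *)

Section SignDescent.
Variables (R : realFieldType) (d : nat).
Local Notation pattern := {ffun 'I_d -> bool}.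
Implicit Types (Q : 'M[R]_d) (u z g : 'cV[R]_d) (P : pattern -> R).

Lemma bilinC Q u z : Q^T = Q -> z^T *m Q *m u = u^T *m Q *m z.
Proof.
move=> symQ; have -> : z^T *m Q *m u = (z^T *m Q *m u)^T.
  by apply/matrixP => i j; rewrite [RHS]mxE (ord1 i) (ord1 j).
by rewrite !trmx_mul trmxK symQ mulmxA.
Qed.

Lemma qformDZ Q u z (a : R) : Q^T = Q ->
  qform Q (u + a *: z) = qform Q u + 2 * a * (u^T *m Q *m z) 0 0 + a ^+ 2 * qform Q z.
Proof.
move=> symQ; rewrite /qform [(u + _)^T]linearD /= [(a *: z)^T]linearZ /= !mulmxDl !mulmxDr.
rewrite -!scalemxAl -!scalemxAr (bilinC u z symQ) !mxE; ring.
Qed.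

Lemma sqp_loss_shift Q xs nu th z (a : R) : Q^T = Q ->
  sqp_loss Q xs nu (th + a *: z) - sqp_loss Q xs nu th =
  a * ((sqp_grad Q xs th)^T *m z) 0 0 + 2^-1 * a ^+ 2 * qform Q z.
Proof.
move=> symQ; rewrite /sqp_loss /sqp_grad [th + _ - _]addrAC qformDZ // trmx_mul symQ.
have two_neq0 : (2 : R) != 0 by rewrite pnatr_eq0.
by field.
Qed.

Lemma E_loss_shift Q xs nu th P (a : R) : Q^T = Q -> \sum_b P b = 1 ->
  E_loss Q xs nu th P a - sqp_loss Q xs nu th =
  a * ((sqp_grad Q xs th)^T *m E_dir P) 0 0 + 2^-1 * a ^+ 2 * E_qform Q P.
Proof.
move=> symQ sumP1.
have -> : sqp_loss Q xs nu th = \sum_b P b * sqp_loss Q xs nu th.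
  by rewrite -mulr_suml sumP1 mul1r.
rewrite /E_loss /E_qform /E_dir -sumrB mulmx_sumr summxE !mulr_sumr -big_split /=.
apply: eq_bigr => b _; rewrite -mulrBr sqp_loss_shift // -scalemxAr [in RHS]mxE; ring.
Qed.

Lemma improvement_opt_step Q xs nu th P : Q^T = Q -> \sum_b P b = 1 ->
  0 < E_qform Q P ->
  improvement Q xs nu th P =
  2^-1 * ((sqp_grad Q xs th)^T *m E_dir P) 0 0 ^+ 2 / E_qform Q P.
Proof.
move=> symQ sumP1 S_gt0; rewrite /improvement E_loss_shift // /opt_step.
set G := (_ *m _) 0 0; set S := E_qform Q P.
have S_neq0 : S != 0 by rewrite gt_eqF.
have -> : - G / S * G + 2^-1 * (- G / S) ^+ 2 * S = - (2^-1 * G ^+ 2 / S) by field.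
by rewrite normrN ger0_norm // divr_ge0 ?(ltW S_gt0) // mulr_ge0 ?sqr_ge0 // invr_ge0 ler0n.
Qed.

Lemma E_dir_coord P i : \sum_b P b = 1 ->
  E_dir P i 0 = 1 - 2 * \sum_(b : pattern | b i) P b.
Proof.
move=> sumP1; rewrite /E_dir summxE (bigID (fun b : pattern => b i)) /=.
rewrite (eq_bigr (fun b => - P b)) => [|b bi]; last by rewrite !mxE bi mulrN1.
rewrite [X in _ + X](eq_bigr P) => [|b /negbTE bi]; last by rewrite !mxE bi mulr1.
rewrite sumrN -{1}sumP1 [in RHS](bigID (fun b : pattern => b i)) /=; ring.
Qed.

Lemma sign_agree_mass P i (x : R) :
  \sum_(b | sign_of_pattern R b i == sgn x) P b =
  if 0 <= x then \sum_(b : pattern | b i) P b else \sum_(b : pattern | ~~ b i) P b.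
Proof.
have one_neqN1 : (1 : R) != -1 by apply/eqP => h; lra.
rewrite /sgn /sign_of_pattern; case: ifP => _; apply: eq_bigl => b.
  by case: (b i); rewrite ?eqxx // eq_sym (negbTE one_neqN1).
by case: (b i); rewrite ?eqxx // (negbTE one_neqN1).
Qed.

Lemma gradT_E_dir g P : \sum_b P b = 1 ->
  (g^T *m E_dir P) 0 0 =
  - \sum_i (2 * \sum_(b | sign_of_pattern R b i == sgn (g i 0)) P b - 1) * `|g i 0|.
Proof.
move=> sumP1; rewrite mxE -sumrN; apply: eq_bigr => i _.
have mass_split : \sum_(b : pattern | ~~ b i) P b = 1 - \sum_(b : pattern | b i) P b.
  by rewrite -sumP1 (bigID (fun b : pattern => b i) predT) /=; ring.
rewrite mxE E_dir_coord // sign_agree_mass.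
case: ifP => [x_ge0 | /negbT]; first by rewrite ger0_norm //; ring.
by rewrite -ltNge => x_lt0; rewrite ltr0_norm // mass_split; ring.
Qed.

Lemma qform_sign_le Q z : (forall i, `|z i 0| = 1) ->
  qform Q z <= \sum_i \sum_j `|Q i j|.
Proof.
move=> unit_z; rewrite /qform mxE exchange_big /=.
apply: ler_sum => j _; rewrite mxE mulr_suml; apply: ler_sum => i _.
by rewrite !mxE (le_trans (ler_norm _)) // !normrM !unit_z mul1r mulr1.
Qed.

Lemma E_qform_le Q P : (forall b, 0 <= P b) -> \sum_b P b = 1 ->
  E_qform Q P <= \sum_i \sum_j `|Q i j|.
Proof.
move=> P_ge0 sumP1; rewrite /E_qform -[X in _ <= X]mul1r -sumP1 mulr_suml.
apply: ler_sum => b _; apply: ler_wpM2l => //; apply: qform_sign_le => i.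
by rewrite mxE; case: (b i); rewrite ?normrN normr1.
Qed.

Lemma pos_def_diag_gt0 Q i : pos_def Q -> 0 < Q i i.
Proof.
case=> _ posQ; have := posQ (delta_mx i 0).
rewrite /qform trmx_delta -rowE -colE !mxE; apply; apply/eqP.
by move/matrixP/(_ i 0); rewrite !mxE !eqxx => /eqP; rewrite oner_eq0.
Qed.

Lemma E_qform_gt0 Q P : (0 < d)%N -> pos_def Q ->
  (forall b, 0 <= P b) -> \sum_b P b = 1 -> 0 < E_qform Q P.
Proof.
move=> d_gt0 [_ posQ] P_ge0 sumP1.
have qform_gt0 b : 0 < qform Q (ssd_dir R b).
  apply: posQ; apply/eqP => /matrixP/(_ (Ordinal d_gt0) 0); rewrite !mxE.
  by case: (b _) => /eqP; rewrite ?oppr_eq0 oner_eq0.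
have [b Pb_gt0] : exists b, 0 < P b.
  case: (pickP (fun b => 0 < P b)) => [b|P_le0]; first by exists b.
  have := sumP1; rewrite big1 => [/eqP|b _]; first by rewrite eq_sym oner_eq0.
  by apply/le_anti; rewrite P_ge0 leNgt P_le0.
rewrite /E_qform (bigD1 b) //=; apply: ltr_wpDr; last by rewrite mulr_gt0.
by apply: sumr_ge0 => c _; rewrite mulr_ge0 // ltW.
Qed.

End SignDescent.

Lemma mxtrace_char_poly_roots (R : fieldType) (d : nat) (Q : 'M[R]_d) (lam : 'I_d -> R) :
  char_poly Q = \prod_(i < d) ('X - (lam i)%:P) -> \tr Q = \sum_i lam i.
Proof.
case: d Q lam => [|d] Q lam charQ; first by rewrite /mxtrace !big_ord0.
have := char_poly_trace Q (isT : (0 < d.+1)%N); rewrite charQ.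
have -> : \prod_(i < d.+1) ('X - (lam i)%:P) = \prod_(x <- map lam (enum 'I_d.+1)) ('X - x%:P).
  by rewrite big_map big_enum.
have := @coefPn_prod_XsubC _ (map lam (enum 'I_d.+1)).
rewrite size_map size_enum_ord => -> //.
by rewrite big_map big_enum => /oppr_inj.
Qed.

Theorem mainTheorem6 (R : realFieldType) (d : nat) (Q : 'M[R]_d) (lam : 'I_d -> R)
  (xstar : 'cV[R]_d) (nu : R) (theta : 'cV[R]_d) (P : {ffun 'I_d -> bool} -> R) :
  pos_def Q ->
  char_poly Q = \prod_(i < d) ('X - (lam i)%:P) ->
  (forall i, 0 < lam i) ->
  0 <= nu ->
  (forall b, 0 <= P b) ->
  \sum_b P b = 1 ->
  improvement Q xstar nu theta P >=
    2^-1 * (\sum_i (2 * rho Q xstar theta P i - 1) * `|sqp_grad Q xstar theta i 0|) ^+ 2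
      / (\sum_i lam i) * p_diag Q.
Proof.
move=> posQ charQ lam_gt0 _ P_ge0 sumP1.
have [d0|d_gt0] := posnP d.
  by subst d; rewrite !big_ord0 expr0n /= mulr0 !mul0r normr_ge0.
have S_gt0 := E_qform_gt0 d_gt0 posQ P_ge0 sumP1.
have S_le := E_qform_le Q P_ge0 sumP1.
have trace_abs : \sum_i lam i = \sum_i `|Q i i|.
  rewrite -(mxtrace_char_poly_roots charQ); apply: eq_bigr => i _.
  by rewrite ger0_norm // ltW // pos_def_diag_gt0.
have T_gt0 : 0 < \sum_i lam i.
  rewrite (bigD1 (Ordinal d_gt0)) //=; apply: ltr_wpDr => //.
  by apply: sumr_ge0 => i _; apply: ltW.
rewrite improvement_opt_step ?posQ.1 //; set N := \sum_i _ * `|_|.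
have -> : ((sqp_grad Q xstar theta)^T *m E_dir P) 0 0 = - N := gradT_E_dir _ sumP1.
rewrite sqrrN /p_diag -trace_abs.
set T := \sum_i lam i.
rewrite mulrA -[_ / T * T]mulrA mulVf ?gt_eqF // mulr1.
rewrite ler_wpM2l ?lef_pV2 ?posrE ?(lt_le_trans S_gt0) //.
by rewrite mulr_ge0 ?sqr_ge0 // invr_ge0 ler0n.
Qed.
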